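(* Let $\mathcal{H}=\mathbb{C}^2$ and let $\mathcal{D}=\{\Psi_\rho : \rho \text{ a density operator on } \mathcal{H}\}$ be the set of depolarizing channels, where $\Psi_\rho(A)=(\operatorname{tr}A)\rho$ for all $A\in\mathcal{L}(\mathcal{H})$. For every density operator $\tau$ on $\mathcal{H}\otimes\mathcal{H}$, $$C(\tau,\mathcal{D})=\max_{\Psi\in\mathcal{D}}\operatorname{tr}[\tau J_\Psi]=\frac12\left(1+\|\boldsymbol{b}(\tau_2)\|\right),$$ where $\tau_2=\operatorname{tr}_1\tau$.
   Context: $\{|0\rangle,|1\rangle\}$ is the computational basis of $\mathcal{H}=\mathbb{C}^2$. For a linear map $\Psi$ on $\mathcal{L}(\mathcal{H})$, its Choi operator is $J_\Psi=(\mathrm{id}\otimes\Psi)(P'_+)$ with $P'_+=\sum_{i,j=0}^1|i\rangle\langle j|\otimes|i\rangle\langle j|$. $\operatorname{tr}_1$ denotes the partial trace over the first tensor factor. For an operator $X$ on $\mathcal{H}$, its Bloch vector is $\boldsymbol{b}(X)\in\mathbb{R}^3$ with $b(X)_i=\operatorname{tr}[\sigma_i X]$, $\sigma_1,\sigma_2,\sigma_3$ being the Pauli matrices, and $\|\cdot\|$ is the Euclidean norm on $\mathbb{R}^3$. *)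

From HB Require Import structures.
From mathcomp Require Import all_boot all_order all_algebra.
From mathcomp Require Import reals.
From mathcomp Require Export complex mxtens.
Set Implicit Arguments. Unset Strict Implicit. Unset Printing Implicit Defensive.
Import Order.TTheory GRing.Theory Num.Theory.
Local Open Scope ring_scope.

Section QDefs.
Variable C : numClosedFieldType.

Definition adjmx {m n} (A : 'M[C]_(m, n)) : 'M[C]_(n, m) := (map_mx Num.conj A)^T.

Definition density {n} (A : 'M[C]_n) : Prop :=
  adjmx A = A /\ (forall v : 'cV[C]_n, 0 <= (adjmx v *m A *m v) 0 0) /\ \tr A = 1.

(* Choi operator J_Psi = sum_{i,j} |i><j| (x) Psi(|i><j|), first tensor factor
   indexed by the high-order part of mxtens_index *)
Definition choi {n} (Psi : 'M[C]_n -> 'M[C]_n) : 'M[C]_(n * n) :=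
  \sum_(i < n) \sum_(j < n) (delta_mx i j *t Psi (delta_mx i j)).

Definition ptrace1 {n} (T : 'M[C]_(n * n)) : 'M[C]_n :=
  \matrix_(k, l) \sum_(i < n) T (mxtens_index (i, k)) (mxtens_index (i, l)).

Definition depol {n} (rho : 'M[C]_n) (A : 'M[C]_n) : 'M[C]_n := \tr A *: rho.

Definition depol_channels {n} (Psi : 'M[C]_n -> 'M[C]_n) : Prop :=
  exists rho : 'M[C]_n, density rho /\ Psi = depol rho.

Definition sigma1 : 'M[C]_2 := \matrix_(i, j) (if i != j then 1 else 0).
Definition sigma2 : 'M[C]_2 :=
  \matrix_(i, j) (if ((i : nat) == 0%N) && ((j : nat) == 1%N) then - 'i
                  else if ((i : nat) == 1%N) && ((j : nat) == 0%N) then 'i else 0).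
Definition sigma3 : 'M[C]_2 :=
  \matrix_(i, j) (if i == j then (if (i : nat) == 0%N then 1 else -1) else 0).

Definition pauli (k : 'I_3) : 'M[C]_2 :=
  if (k : nat) == 0%N then sigma1 else if (k : nat) == 1%N then sigma2 else sigma3.

Definition bloch (X : 'M[C]_2) : 'I_3 -> C := fun k => \tr (pauli k *m X).

Definition bloch_norm (X : 'M[C]_2) : C := sqrtC (\sum_(k < 3) `|bloch X k| ^+ 2).

End QDefs.

From HB Require Import structures.
From mathcomp Require Import all_boot all_order all_algebra.
From mathcomp Require Import reals complex mxtens.
From mathcomp Require Import ring lra.

(* For a replacement channel the Choi operator is [1 *t rho], so
   [tr (tau J) = tr (tau_2 rho)] with [tau_2] the reduced state.  Writing the
   qubit operators as [tau_2 = (1 + b.sigma) / 2] and [rho = (1 + c.sigma) / 2],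
   this trace is [(1 + b.c) / 2], and [rho] is a state exactly when [|c| <= 1].
   Cauchy-Schwarz bounds [b.c] by [|b|], with equality at [c = b / |b|]. *)

Set Implicit Arguments.
Unset Strict Implicit.
Unset Printing Implicit Defensive.
Import Order.TTheory GRing.Theory Num.Theory.
Local Open Scope ring_scope.

Lemma sum_mxtens_index (V : nmodType) m n (F : 'I_(m * n) -> V) :
  \sum_k F k = \sum_(i < m) \sum_(j < n) F (mxtens_index (i, j)).
Proof.
rewrite pair_big /= (reindex (@mxtens_index m n)); last first.
  by exists (@mxtens_unindex m n) => k _; rewrite (mxtens_indexK, mxtens_unindexK).
by apply: eq_bigr => -[i j].
Qed.

Section ChoiOperator.
Variables (C : numClosedFieldType) (n : nat).

Lemma mxtrace_delta (i j : 'I_n) : \tr (delta_mx i j : 'M[C]_n) = (i == j)%:R.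
Proof.
rewrite /mxtrace (bigD1 i) //= big1 ?addr0 => [|k /negbTE ki]; rewrite mxE ?eqxx //.
by rewrite ki.
Qed.

Lemma choi_depol (rho : 'M[C]_n) : choi (depol rho) = 1%:M *t rho.
Proof.
apply/matrixP => k l.
case: (mxtens_indexP k) => a b; case: (mxtens_indexP l) => c d.
rewrite tensmxE mxE /choi summxE (bigD1 a) //= [X in _ + X]big1 ?addr0; last first.
  move=> i /negbTE ia; rewrite summxE big1 // => j _.
  by rewrite /depol tensmxE !mxE [a == i]eq_sym ia mul0r.
rewrite summxE (bigD1 c) //= [X in _ + X]big1 ?addr0; last first.
  by move=> j /negbTE jc; rewrite /depol tensmxE !mxE [c == j]eq_sym jc andbF mul0r.
by rewrite /depol tensmxE !mxE mxtrace_delta !eqxx mul1r.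
Qed.

Lemma mxtrace_mul_tens1mx (T : 'M[C]_(n * n)) (B : 'M[C]_n) :
  \tr (T *m (1%:M *t B)) = \tr (ptrace1 T *m B).
Proof.
have collapse a b :
    \sum_(i < n) \sum_(j < n) T (mxtens_index (a, b)) (mxtens_index (i, j))
      * (1%:M *t B) (mxtens_index (i, j)) (mxtens_index (a, b))
  = \sum_(j < n) T (mxtens_index (a, b)) (mxtens_index (a, j)) * B j b.
  rewrite (bigD1 a) //= [X in _ + X]big1 ?addr0 => [|i /negbTE ia].
    by apply: eq_bigr => j _; rewrite tensmxE mxE eqxx mul1r.
  by rewrite big1 // => j _; rewrite tensmxE mxE ia mul0r mulr0.
rewrite /mxtrace sum_mxtens_index.
under eq_bigr => a _ do under eq_bigr => b _ do rewrite mxE sum_mxtens_index collapse.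
rewrite exchange_big; apply: eq_bigr => b _; rewrite mxE.
under [RHS]eq_bigr => j _ do rewrite mxE mulr_suml.
by rewrite exchange_big.
Qed.

Lemma adjmx_ptrace1 (T : 'M[C]_(n * n)) : adjmx T = T -> adjmx (ptrace1 T) = ptrace1 T.
Proof.
move=> /matrixP hT; apply/matrixP => k l; rewrite !mxE rmorph_sum.
by apply: eq_bigr => i _; have := hT (mxtens_index (i, k)) (mxtens_index (i, l)); rewrite !mxE.
Qed.

Lemma mxtrace_ptrace1 (T : 'M[C]_(n * n)) : \tr (ptrace1 T) = \tr T.
Proof.
rewrite [RHS]/mxtrace sum_mxtens_index exchange_big.
by apply: eq_bigr => k _; rewrite mxE.
Qed.

End ChoiOperator.

Local Open Scope complex_scope.

Section Euclidean3.
Variable R : rcfType.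

Definition norm3 (x y z : R) := Num.sqrt (x ^+ 2 + y ^+ 2 + z ^+ 2).

Lemma norm3_ge0 (x y z : R) : 0 <= norm3 x y z.
Proof. exact: sqrtr_ge0. Qed.

Lemma sqr_norm3 (x y z : R) : norm3 x y z ^+ 2 = x ^+ 2 + y ^+ 2 + z ^+ 2.
Proof. by rewrite sqr_sqrtr // !addr_ge0 ?sqr_ge0. Qed.

Lemma norm3_le1 (x y z : R) : (norm3 x y z <= 1) = (x ^+ 2 + y ^+ 2 + z ^+ 2 <= 1).
Proof. by rewrite /norm3 -[X in _ <= X](sqrtr1 R) ler_sqrt. Qed.

Lemma dot3_le_norm3 (x y z x' y' z' : R) :
  x * x' + y * y' + z * z' <= norm3 x y z * norm3 x' y' z'.
Proof.
rewrite /norm3 -sqrtrM ?addr_ge0 ?sqr_ge0 //.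
apply: le_trans (ler_norm _) _; rewrite -sqrtr_sqr ler_sqrt ?mulr_ge0 ?addr_ge0 ?sqr_ge0 //.
rewrite -subr_ge0.
have -> : (x ^+ 2 + y ^+ 2 + z ^+ 2) * (x' ^+ 2 + y' ^+ 2 + z' ^+ 2)
          - (x * x' + y * y' + z * z') ^+ 2
  = (x * y' - y * x') ^+ 2 + (y * z' - z * y') ^+ 2 + (z * x' - x * z') ^+ 2 by ring.
by rewrite !addr_ge0 ?sqr_ge0.
Qed.

Lemma norm3_normalize_le1 (x y z : R) :
  norm3 (x / norm3 x y z) (y / norm3 x y z) (z / norm3 x y z) <= 1.
Proof.
move: (norm3 x y z) (sqr_norm3 x y z) => r r2.
have [r0 | rn0] := eqVneq r 0.
  by rewrite r0 !invr0 !mulr0 /norm3 expr0n /= !addr0 sqrtr0 ler01.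
rewrite /norm3; have -> : (x / r) ^+ 2 + (y / r) ^+ 2 + (z / r) ^+ 2 = r ^+ 2 / r ^+ 2.
  by rewrite {1}r2; field.
by rewrite divff ?expf_neq0 // sqrtr1.
Qed.

Lemma dot3_normalize (x y z : R) :
  x * (x / norm3 x y z) + y * (y / norm3 x y z) + z * (z / norm3 x y z) = norm3 x y z.
Proof.
move: (norm3 x y z) (sqr_norm3 x y z) => r r2.
have [r0 | rn0] := eqVneq r 0; first by rewrite r0 !invr0 !mulr0 !addr0.
transitivity (r ^+ 2 / r); first by rewrite r2; field.
by rewrite expr2 mulfK.
Qed.

End Euclidean3.

Section Qubit.
Variable R : rcfType.
Local Notation i1 := (lift ord0 ord0 : 'I_2).

Lemma conj_complex (a b : R) : Num.conj (a +i* b) = a -i* b.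
Proof. by []. Qed.

(* [(t 1 + x sigma1 + y sigma2 + z sigma3) / 2]: trace [t], Bloch vector [(x, y, z)]. *)
Definition bloch_mx (t x y z : R) : 'M[R[i]]_2 :=
  \matrix_(i, j)
    if i == j then (if i == ord0 then ((t + z) / 2)%:C else ((t - z) / 2)%:C)
    else if i == ord0 then (x / 2) -i* (y / 2) else (x / 2) +i* (y / 2).

Definition col2 (a b : R[i]) : 'cV[R[i]]_2 := \col_i (if i == ord0 then a else b).

Lemma ord2_cases (i : 'I_2) : i = ord0 \/ i = i1.
Proof. by case: i => [[|[|//]]] ?; [left | right]; apply: val_inj. Qed.

Lemma col2_eta (v : 'cV[R[i]]_2) : v = col2 (v ord0 0) (v i1 0).
Proof. by apply/matrixP => i j; rewrite [j]ord1 !mxE; case: (ord2_cases i) => ->. Qed.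

Lemma adjmx_bloch_mx t x y z : adjmx (bloch_mx t x y z) = bloch_mx t x y z.
Proof.
apply/matrixP => i j; rewrite !mxE.
by case: (ord2_cases i) => ->; case: (ord2_cases j) => -> /=;
  rewrite -?complexr0 conj_complex ?oppr0 ?opprK.
Qed.

Lemma hermitian_bloch_mx (X : 'M[R[i]]_2) :
  adjmx X = X -> exists t x y z, X = bloch_mx t x y z.
Proof.
move=> /matrixP hX.
have real_diag k : exists a : R, X k k = a%:C.
  by apply/complex_realP; rewrite CrealE; have := hX k k; rewrite !mxE => ->.
have [a Xa] := real_diag ord0; have [d Xd] := real_diag i1.
have Xoff : X i1 ord0 = Num.conj (X ord0 i1) by have := hX i1 ord0; rewrite !mxE.
case E: (X ord0 i1) Xoff => [c1 c2] Xoff.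
exists (a + d), (2 * c1), (- (2 * c2)), (a - d).
apply/matrixP => i j; rewrite !mxE.
case: (ord2_cases i) => ->; case: (ord2_cases j) => -> /=;
  by rewrite ?Xa ?Xd ?E ?Xoff ?conj_complex; congr (_ +i* _); field.
Qed.

Lemma mxtrace_bloch_mx t x y z : \tr (bloch_mx t x y z) = t%:C.
Proof.
rewrite /mxtrace !big_ord_recl big_ord0 !mxE /=; simpc.
by congr (_ +i* _); field.
Qed.

Lemma mxtrace_mul_bloch_mx t x y z t' x' y' z' :
  \tr (bloch_mx t x y z *m bloch_mx t' x' y' z')
  = ((t * t' + (x * x' + y * y' + z * z')) / 2)%:C.
Proof.
rewrite /mxtrace !big_ord_recl big_ord0 !mxE !big_ord_recl !big_ord0 !mxE /=; simpc.
by congr (_ +i* _); field.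
Qed.

Lemma sqrtC_real_complex (r : R) : 0 <= r -> sqrtC r%:C = (Num.sqrt r)%:C.
Proof.
move=> r_ge0; rewrite -[r in LHS]sqr_sqrtr // rmorphXn sqrCK //.
by rewrite ler0c sqrtr_ge0.
Qed.

Lemma bloch_norm_bloch_mx t x y z :
  bloch_norm (bloch_mx t x y z) = (norm3 x y z)%:C.
Proof.
have [bx b_y bz] : [/\ bloch (bloch_mx t x y z) ord0 = x%:C,
    bloch (bloch_mx t x y z) (lift ord0 ord0) = y%:C
  & bloch (bloch_mx t x y z) (lift ord0 (lift ord0 ord0)) = z%:C].
  rewrite /bloch /pauli /mxtrace; split; rewrite !big_ord_recl !big_ord0 /= !mxE;
  by rewrite ?big_ord_recl ?big_ord0 /= ?mxE /=; simpc; congr (_ +i* _); field.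
rewrite /bloch_norm !big_ord_recl big_ord0 bx b_y bz -!add_Re2_Im2 /=.
rewrite !expr0n !addr0 -!rmorphD addrA sqrtC_real_complex //.
by rewrite !addr_ge0 ?sqr_ge0.
Qed.

Lemma qform_bloch_mx t x y z a1 a2 b1 b2 :
  let v := col2 (a1 +i* a2) (b1 +i* b2) in
  let na := a1 ^+ 2 + a2 ^+ 2 in let nb := b1 ^+ 2 + b2 ^+ 2 in
  (adjmx v *m bloch_mx t x y z *m v) 0 0 =
  ((t * (na + nb) + (x * (2 * (a1 * b1 + a2 * b2)) + y * (2 * (a1 * b2 - a2 * b1))
    + z * (na - nb))) / 2)%:C.
Proof.
rewrite /= !mxE !big_ord_recl !big_ord0 /= !mxE !big_ord_recl !big_ord0 /= !mxE /=.
by rewrite !conj_complex; simpc; congr (_ +i* _); field.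
Qed.

Lemma density_bloch_mxP t x y z :
  density (bloch_mx t x y z) <-> t = 1 /\ norm3 x y z <= 1.
Proof.
rewrite /density adjmx_bloch_mx mxtrace_bloch_mx norm3_le1; split.
  case=> _ [psd /complexI t1]; split => //; rewrite t1 in psd.
  (* The quadratic forms at these two vectors are [(1 +- z) (1 - |(x, y, z)|^2) / 2]. *)
  have := psd (col2 ((- x) +i* y) ((1 + z) +i* 0)).
  have := psd (col2 ((1 - z) +i* 0) ((- x) +i* (- y))).
  by rewrite !qform_bloch_mx !ler0c => h1 h2; lra.
case=> -> v_le1; split=> //; split=> //.
move=> v; rewrite (col2_eta v); case: (v ord0 0) => a1 a2; case: (v i1 0) => b1 b2.
rewrite qform_bloch_mx ler0c -norm3_le1 in v_le1 *.
(* The form is [(N + (x, y, z).(P, Q, M)) / 2] with [|(P, Q, M)| = N]. *)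
set P := 2 * (a1 * b1 + a2 * b2); set Q := 2 * (a1 * b2 - a2 * b1).
set N := _ + (b1 ^+ 2 + b2 ^+ 2); set M := _ - (b1 ^+ 2 + b2 ^+ 2).
have N_ge0 : 0 <= N by rewrite !addr_ge0 ?sqr_ge0.
have normW : norm3 (- P) (- Q) (- M) = N.
  rewrite /norm3 !sqrrN (_ : P ^+ 2 + Q ^+ 2 + M ^+ 2 = N ^+ 2) ?sqrtr_sqr ?ger0_norm //.
  by rewrite /P /Q /M /N; ring.
have := dot3_le_norm3 x y z (- P) (- Q) (- M).
have := ler_wpM2r N_ge0 v_le1.
rewrite normW; lra.
Qed.

Lemma mxtrace_mul_density_le (X rho : 'M[R[i]]_2) :
  adjmx X = X -> \tr X = 1 -> density rho ->
  \tr (X *m rho) <= (1 + bloch_norm X) / 2.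
Proof.
move=> /hermitian_bloch_mx [t [x [y [z ->]]]]; rewrite mxtrace_bloch_mx => /complexI ->.
move=> rho_density; have [t' [x' [y' [z' rhoE]]]] := hermitian_bloch_mx (proj1 rho_density).
move: rho_density; rewrite rhoE density_bloch_mxP => -[-> v'_le1].
rewrite mxtrace_mul_bloch_mx bloch_norm_bloch_mx.
rewrite -(rmorph1 (real_complex R)) -rmorphD -(rmorph_nat (real_complex R)) -fmorph_div lecR.
have := dot3_le_norm3 x y z x' y' z'.
have := ler_wpM2l (norm3_ge0 x y z) v'_le1.
lra.
Qed.

Lemma exists_density_mxtrace_mul_eq (X : 'M[R[i]]_2) :
  adjmx X = X -> \tr X = 1 ->
  exists2 rho, density rho & \tr (X *m rho) = (1 + bloch_norm X) / 2.
Proof.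
move=> /hermitian_bloch_mx [t [x [y [z ->]]]]; rewrite mxtrace_bloch_mx => /complexI ->.
pose r := norm3 x y z.
(* For [r = 0] the junk value [x / 0 = 0] gives the maximally mixed state, still optimal. *)
exists (bloch_mx 1 (x / r) (y / r) (z / r)).
  by apply/density_bloch_mxP; split; last exact: norm3_normalize_le1.
rewrite mxtrace_mul_bloch_mx bloch_norm_bloch_mx dot3_normalize mul1r.
by rewrite -(rmorph1 (real_complex R)) -rmorphD -(rmorph_nat (real_complex R)) -fmorph_div.
Qed.

End Qubit.

Theorem proposition1 (R : realType) (tau : 'M[R[i]]_(2 * 2)) :
  density tau ->
  let v := (1 + bloch_norm (ptrace1 tau)) / 2 in
  (exists Psi : 'M[R[i]]_2 -> 'M[R[i]]_2,
      depol_channels Psi /\ \tr (tau *m choi Psi) = v) /\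
  (forall Psi : 'M[R[i]]_2 -> 'M[R[i]]_2,
      depol_channels Psi -> \tr (tau *m choi Psi) <= v).
Proof.
move=> tau_density v.
have X_herm := adjmx_ptrace1 (proj1 tau_density).
have X_tr1 : \tr (ptrace1 tau) = 1.
  by rewrite mxtrace_ptrace1 (proj2 (proj2 tau_density)).
split.
  have [rho rho_density rhoE] := exists_density_mxtrace_mul_eq X_herm X_tr1.
  exists (depol rho); split; first by exists rho.
  by rewrite choi_depol mxtrace_mul_tens1mx rhoE.
move=> Psi [rho [rho_density ->]].
rewrite choi_depol mxtrace_mul_tens1mx.
exact: mxtrace_mul_density_le X_herm X_tr1 rho_density.
Qed.
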